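(* Let $U=\{u_1,\dots,u_{3n}\}$ with $n\ge1$ and let $\mathcal{S}=\{S_1,\dots,S_p\}$, $p\ge 1$, be a family of $3$-element subsets of $U$. Fix an integer $m\ge 6n+3p$. Build the labeled complete bipartite graph $G$ with partite sets $V_1=\{x_1,\dots,x_{3n}\}\cup\{x(S_1),\dots,x(S_p)\}$ and $V_2=\{y_1,\dots,y_{3n}\}\cup\{y_k(S_i):1\le i\le p,\,1\le k\le m\}\cup\{z_1,\dots,z_{3n}\}$, with labels: $x_iy_j$ is $+$ iff $i=j$ or $u_i,u_j$ lie in a common member of $\mathcal{S}$; $x(S_i)y_k(S_\ell)$ is $+$ iff $i=\ell$; $x_iy_k(S_j)$ and $x(S_j)y_i$ are $+$ iff $u_i\in S_j$; $x_iz_j$ is $+$ for all $i,j$; $x(S_i)z_j$ is $-$ for all $i,j$. Assign tolerances $t_{x(S_i)}=3$ and $t_{x_i}=m(d(u_i)-1)+(c(u_i)-2)+(3n-3)$, where $d(u_i)$ is the number of members of $\mathcal{S}$ containing $u_i$ and $c(u_i)$ is the number of $u_j\in U\setminus\{u_i\}$ lying in a common member of $\mathcal{S}$ with $u_i$. Then $G$ has a clustering in which each $v\in V_1$ has at most $t_v$ incident errors if and only if there is a subfamily $\mathcal{S}'\subseteq\mathcal{S}$ such that each element of $U$ lies in exactly one member of $\mathcal{S}'$.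
   Context: A clustering is a partition of $V(G)$. An error at a vertex $v$ is an incident edge that is a $+$ edge between different clusters or a $-$ edge within a cluster. *)

From HB Require Import structures.
From mathcomp Require Import all_boot all_order all_algebra.
Set Implicit Arguments. Unset Strict Implicit. Unset Printing Implicit Defensive.
Import Order.TTheory GRing.Theory Num.Theory.

(* Universe U = {u_0,...,u_{3n-1}} is 'I_(3*n); the family is S : 'I_p -> {set 'I_(3*n)}. *)

(* V1 = {x_i} + {x(S_i)} *)
Definition V1 (n p : nat) : finType := ('I_(3 * n) + 'I_p)%type.
(* V2 = {y_j} + {y_k(S_l)} (pair (l,k)) + {z_j} *)
Definition V2 (n p m : nat) : finType := ('I_(3 * n) + ('I_p * 'I_m) + 'I_(3 * n))%type.
Definition Vx (n p m : nat) : finType := (V1 n p + V2 n p m)%type.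

Definition plus_edge (n p m : nat) (S : 'I_p -> {set 'I_(3 * n)})
    (x : V1 n p) (y : V2 n p m) : bool :=
  match x, y with
  | inl i, inl (inl j) => (i == j) || [exists l, (i \in S l) && (j \in S l)]
  | inl i, inl (inr (j, _)) => i \in S j
  | inl _, inr _ => true
  | inr i, inl (inl j) => j \in S i
  | inr i, inl (inr (l, _)) => i == l
  | inr _, inr _ => false
  end.

(* number of errors at x in V1 for the clustering (partition) P of V(G);
   G is complete bipartite, so the edges at x are exactly x y, y in V2 *)
Definition errors_at (n p m : nat) (S : 'I_p -> {set 'I_(3 * n)})
    (P : {set {set Vx n p m}}) (x : V1 n p) : nat :=
  #|[set y : V2 n p m |
      if @plus_edge n p m S x y
      then pblock P (inl x : Vx n p m) != pblock P (inr y)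
      else pblock P (inl x : Vx n p m) == pblock P (inr y)]|.

Definition deg (n p : nat) (S : 'I_p -> {set 'I_(3 * n)}) (u : 'I_(3 * n)) : nat :=
  #|[set j | u \in S j]|.

Definition cnb (n p : nat) (S : 'I_p -> {set 'I_(3 * n)}) (u : 'I_(3 * n)) : nat :=
  #|[set v | (v != u) && [exists j, (u \in S j) && (v \in S j)]]|.

Definition tol (n p m : nat) (S : 'I_p -> {set 'I_(3 * n)}) (x : V1 n p) : int :=
  match x with
  | inl i => (m%:Z * ((deg S i)%:Z - 1) + ((cnb S i)%:Z - 2) + ((3 * n)%:Z - 3))%R
  | inr _ => 3%:Z
  end.

From HB Require Import structures.
From mathcomp Require Import all_boot all_order all_algebra.
From mathcomp Require Import zify.
Set Implicit Arguments. Unset Strict Implicit. Unset Printing Implicit Defensive.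
Import Order.TTheory GRing.Theory Num.Theory.

(* An exact cover T yields the clustering whose clusters are, for each j, the
   vertex x(S_j) with its m vertices y_k(S_j), joined when S_j is in T by the
   vertices x_u, y_u, z_u for the three u in S_j; every tolerance is then met.
   Conversely, call S_j plus-closed when the cluster of x(S_j) contains all the
   + neighbours of x(S_j).  The tolerance of x_u forces at least m + 6 of its +
   neighbours into its cluster.  If no x(S_j) with u in S_j shared that
   cluster, then, since x(S_j) tolerates only 3 errors, almost none of the
   d(u) m vertices y_k(S_j) would be in it, i.e. too many errors at x_u.  The
   x(S_j) sharing the cluster is plus-closed, because it has only m + 3 +
   neighbours and tolerance 3.  Finally two plus-closed sets meeting in u have
   x(S_j), x(S_l) and y_u in one cluster, so the m vertices y_k(S_j) are errors
   at x(S_l).  Hence the plus-closed sets form an exact cover. *)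

Lemma card_sum_pred (A B : finType) (X : pred (A + B)) :
  #|[set x | X x]| = #|[set a | X (inl a)]| + #|[set b | X (inr b)]|.
Proof. by rewrite -!sum1dep_card big_sumType. Qed.

Lemma card_prod_pred (I J : finType) (X : pred (I * J)) :
  #|[set x | X x]| = \sum_i #|[set k | X (i, k)]|.
Proof.
rewrite -sum1dep_card (eq_bigr (fun i => \sum_(k | X (i, k)) 1)) => [|i _].
  by rewrite pair_big_dep; apply: eq_bigl => -[i k].
by rewrite sum1dep_card.
Qed.

Lemma card_fst_pred (I J : finType) (Q : pred I) :
  #|[set x : I * J | Q x.1]| = #|[set i | Q i]| * #|J|.
Proof.
have -> : [set x : I * J | Q x.1] = setX [set i | Q i] [set: J].
  by apply/setP => -[i j]; rewrite !inE andbT.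
by rewrite cardsX cardsT.
Qed.

Lemma card_preimset_le (aT rT : finType) (f : aT -> rT) (A : {set rT}) :
  injective f -> #|f @^-1: A| <= #|A|.
Proof.
move=> f_inj; rewrite -(card_imset _ f_inj); apply: subset_leq_card.
by apply/subsetP => y /imsetP[x]; rewrite inE => Ax ->.
Qed.

Lemma subset_of_card_gap (T : finType) (A B : {set T}) :
  #|A :\: B| + #|B :\: A| + #|A| <= #|B| -> A \subset B.
Proof.
rewrite -setD_eq0 -cards_eq0 -leqn0 -(cardsID B A) -(cardsID A B) setIC; lia.
Qed.

Lemma eq_pblock_preim (T rT : finType) (f : T -> rT) (x y : T) :
  let P := preim_partition f [set: T] in (pblock P x == pblock P y) = (f x == f y).
Proof.
have /and3P[/eqP coverP trivP _] := preim_partitionP f [set: T].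
rewrite /= eq_pblock ?coverP ?inE // pblock_equivalence_partition ?inE //.
by move=> x0 y0 z _ _ _; split=> // /eqP ->.
Qed.

Section Graph.
Variables (n p m : nat) (S : 'I_p -> {set 'I_(3 * n)}).

Definition yk (l : 'I_p) (k : 'I_m) : V2 n p m := inl (inr (l, k)).

Lemma yk_inj l : injective (yk l).
Proof. by move=> k1 k2 [->]. Qed.

Definition plus_nbhd (x : V1 n p) := [set y : V2 n p m | plus_edge S x y].

Lemma card_V2_pred (X : pred (V2 n p m)) : #|[set y | X y]| =
  #|[set b | X (inl (inl b))]| + #|[set q | X (inl (inr q))]| + #|[set b | X (inr b)]|.
Proof. by rewrite card_sum_pred (card_sum_pred (fun u => X (inl u))). Qed.

Lemma card_closed_nbhd a :
  #|[set b | (a == b) || [exists l, (a \in S l) && (b \in S l)]]| = (cnb S a).+1.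
Proof.
rewrite /cnb (_ : [set b | _] =
    a |: [set v | (v != a) && [exists l, (a \in S l) && (v \in S l)]]).
  by rewrite cardsU1 !inE eqxx.
by apply/setP => b; rewrite !inE eq_sym; case: (b == a).
Qed.

Lemma card_plus_nbhd_elem a : #|plus_nbhd (inl a)| = (cnb S a).+1 + deg S a * m + 3 * n.
Proof.
rewrite card_V2_pred /= card_closed_nbhd.
rewrite (eq_card (B := [set q : 'I_p * 'I_m | a \in S q.1])) => [|[l k]]; last by rewrite !inE.
by rewrite (card_fst_pred _ (fun l => a \in S l)) -/(setTfor _) cardsT !card_ord.
Qed.

Lemma card_plus_nbhd_set j : #|S j| = 3 -> #|plus_nbhd (inr j)| = m + 3.
Proof.
move=> card_Sj; rewrite card_V2_pred /=.
rewrite (eq_card (B := S j)) => [|b]; last by rewrite !inE.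
rewrite (eq_card (B := [set q : 'I_p * 'I_m | j == q.1])) => [|[l k]]; last by rewrite !inE.
rewrite (card_fst_pred _ (eq_op j)) card_ord (eq_card (B := [set j])) => [|l]; last first.
  by rewrite !inE eq_sym.
by rewrite cards1 (eq_card0 (A := [set b | false])) => [|b]; rewrite ?inE; lia.
Qed.

Lemma le_tol_elem E a : (E%:Z <= tol m S (inl a))%R = (E + m + 6 <= #|plus_nbhd (inl a)|).
Proof.
rewrite card_plus_nbhd_elem /tol; apply/idP/idP; nia.
Qed.

Lemma cnb_lt a : cnb S a < 3 * n.
Proof. by rewrite -card_closed_nbhd -[X in _ <= X]card_ord max_card. Qed.

Lemma deg_le a : deg S a <= p.
Proof. by rewrite /deg -[X in _ <= X]card_ord max_card. Qed.

Variable P : {set {set Vx n p m}}.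

Definition cluster_V2 (x : V1 n p) :=
  [set y : V2 n p m | pblock P (inr y) == pblock P (inl x)].

Lemma errors_atE x : errors_at S P x =
  #|plus_nbhd x :\: cluster_V2 x| + #|cluster_V2 x :\: plus_nbhd x|.
Proof.
rewrite /errors_at -(cardsID (plus_nbhd x)); congr (_ + _); apply: eq_card => y;
  by rewrite !inE eq_sym; case: plus_edge; rewrite ?andbT ?andbF.
Qed.

End Graph.

Arguments yk {n p m}.

Section ClusteringToCover.
Variables (n p m : nat) (S : 'I_p -> {set 'I_(3 * n)}).
Hypothesis card_S : forall i, #|S i| = 3.
Variable P : {set {set Vx n p m}}.
Hypothesis errors_le_tol : forall x, ((errors_at S P x)%:Z <= tol m S x)%R.

Local Notation N := (plus_nbhd m S).
Local Notation C := (cluster_V2 P).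

Lemma errors_set_le j : errors_at S P (inr j) <= 3.
Proof. by have := errors_le_tol (inr j); rewrite lez_nat. Qed.

Lemma card_cluster_elem_ge a : m + 6 <= #|C (inl a)|.
Proof.
have := errors_le_tol (inl a); rewrite le_tol_elem errors_atE.
have := cardsID (C (inl a)) (N (inl a)).
have := subset_leq_card (subsetIr (N (inl a)) (C (inl a))); lia.
Qed.

Definition plus_closed j := N (inr j) \subset C (inr j).

Lemma plus_closed_of_shared_cluster a j :
  pblock P (inl (inl a)) = pblock P (inl (inr j)) -> plus_closed j.
Proof.
move=> same_block; apply: subset_of_card_gap.
have := card_cluster_elem_ge a; rewrite /cluster_V2 same_block -/(cluster_V2 P (inr j)).
have := errors_set_le j; rewrite errors_atE card_plus_nbhd_set //; lia.
Qed.

Lemma card_yk_cluster_le l (v : Vx n p m) : pblock P (inl (inr l)) != pblock P v ->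
  #|[set k | pblock P (inr (yk l k)) == pblock P v]| <= 3.
Proof.
move=> diff_block; apply: leq_trans (errors_set_le l); rewrite errors_atE.
apply: leq_trans (leq_addr _ _); apply: leq_trans (card_preimset_le _ (@yk_inj n p m l)).
apply: subset_leq_card; apply/subsetP => k; rewrite !inE /= eqxx => /eqP ->.
by rewrite eq_sym diff_block.
Qed.

Lemma plus_closed_meet_eq j l b :
  3 < m -> plus_closed j -> plus_closed l -> b \in S j -> b \in S l -> j = l.
Proof.
move=> m_gt3 closed_j closed_l bj bl; apply/eqP/negPn/negP => j_neq_l.
have yb_block x :
    plus_closed x -> b \in S x -> pblock P (inl (inr x)) = pblock P (inr (inl (inl b))).
  move=> closed_x bx; apply/esym/eqP.
  by have := subsetP closed_x (inl (inl b)); rewrite !inE; apply.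
have := errors_set_le l; rewrite errors_atE.
have : m <= #|C (inr l) :\: N (inr l)|.
  rewrite -{1}(card_ord m) -(card_imset _ (@yk_inj n p m j)).
  apply: subset_leq_card; apply/subsetP => y /imsetP[k _ ->].
  rewrite !inE /= eq_sym j_neq_l /= (yb_block l) // -(yb_block j) //.
  by have := subsetP closed_j (yk j k); rewrite !inE /= eqxx; apply.
lia.
Qed.

Hypothesis m_large : 6 * n + 3 * p <= m.

Lemma shared_cluster_exists a :
  exists2 j, a \in S j & pblock P (inl (inl a)) = pblock P (inl (inr j)).
Proof.
case: (boolP [exists j, (a \in S j) && (pblock P (inl (inr j)) == pblock P (inl (inl a)))]).
  by case/existsP => j /andP[aj /eqP <-]; exists j.
rewrite negb_exists => /forallP no_share; exfalso.
set Ca := C (inl a); set Q := [set q : 'I_p * 'I_m | a \in S q.1].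
set QC := [set q : 'I_p * 'I_m | yk q.1 q.2 \in Ca].
have card_Q : #|Q| = deg S a * m by rewrite (card_fst_pred _ (fun l => a \in S l)) card_ord.
have QC_le : #|Q :&: QC| <= 3 * deg S a.
  rewrite (card_prod_pred (fun q => (q \in Q) && (q \in QC))).
  apply: (@leq_trans (\sum_l (if a \in S l then 3 else 0))).
    apply: leq_sum => l _; case: ifP => al.
      have := no_share l; rewrite al /= => /card_yk_cluster_le; apply: leq_trans.
      by apply: subset_leq_card; apply/subsetP => k; rewrite !inE al.
    by rewrite leqn0 cards_eq0; apply/eqP/setP => k; rewrite !inE al.
  by rewrite -big_mkcond sum_nat_cond_const mulnC.
have QN_le : #|Q :\: QC| <= #|N (inl a) :\: Ca|.
  apply: leq_trans (card_preimset_le _ (f := fun q => inl (inr q)) _);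
    last by move=> [l1 k1] [l2 k2] [-> ->].
  by apply: subset_leq_card; apply/subsetP => -[l k]; rewrite !inE andbC.
have := errors_le_tol (inl a).
rewrite le_tol_elem errors_atE card_plus_nbhd_elem -/Ca.
have := cardsID QC Q; have := cnb_lt S a; have := deg_le S a.
nia.
Qed.

End ClusteringToCover.

Section CoverToClustering.
Variables (n p m : nat) (S : 'I_p -> {set 'I_(3 * n)}).
Hypothesis card_S : forall i, #|S i| = 3.
Variable T : {set 'I_p}.
Hypothesis exact_cover : forall u, #|[set j in T | u \in S j]| = 1.

Definition covering_sets a := [set j in T | a \in S j].

Lemma covering_setsE a l : (covering_sets a == [set l]) = (l \in T) && (a \in S l).
Proof.
have /eqP/cards1P[j0 covE] := exact_cover a.
rewrite /covering_sets covE (inj_eq set1_inj).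
by have := in_set1 l j0; rewrite -covE inE eq_sym => <-.
Qed.

Definition cover_label (v : Vx n p m) : {set 'I_p} :=
  match v with
  | inl (inl a) | inr (inl (inl a)) | inr (inr a) => covering_sets a
  | inl (inr j) | inr (inl (inr (j, _))) => [set j]
  end.

Definition cover_clustering := preim_partition cover_label [set: Vx n p m].

Lemma cluster_V2_cover x :
  cluster_V2 cover_clustering x = [set y | cover_label (inr y) == cover_label (inl x)].
Proof. by apply/setP => y; rewrite !inE eq_pblock_preim. Qed.

Lemma cover_errors_elem a : ((errors_at S cover_clustering (inl a))%:Z <= tol m S (inl a))%R.
Proof.
have /cards1P[j0 covE] : #|covering_sets a| == 1 by rewrite exact_cover.
have /andP[Tj0 aj0] : (j0 \in T) && (a \in S j0) by rewrite -covering_setsE covE.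
rewrite le_tol_elem errors_atE cluster_V2_cover (_ : cover_label (inl (inl a)) = [set j0]) //.
set N := plus_nbhd m S (inl a); set C := [set y | _ == _].
have C_sub : C \subset N.
  apply/subsetP => -[[b|[l k]]|b]; rewrite !inE /= ?covering_setsE ?(inj_eq set1_inj) //.
    by case/andP=> _ bj0; apply/orP; right; apply/existsP; exists j0; rewrite aj0.
  by move=> /eqP ->.
have card_C : #|C| = m + 6.
  rewrite card_V2_pred /=.
  rewrite (eq_card (B := S j0)) => [|b]; last by rewrite !inE covering_setsE Tj0.
  rewrite (eq_card (B := [set q : 'I_p * 'I_m | q.1 == j0])) => [|[l k]]; last first.
    by rewrite !inE (inj_eq set1_inj).
  by rewrite (card_fst_pred _ (eq_op^~ j0)) card_ord (eq_card (B := [set j0])) => [|l];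
    rewrite ?cards1 ?inE ?card_S; lia.
have := cardsID C N; rewrite (setIidPr C_sub).
by move: C_sub; rewrite -setD_eq0 => /eqP ->; rewrite cards0 card_C; lia.
Qed.

Lemma cover_errors_set j : ((errors_at S cover_clustering (inr j))%:Z <= tol m S (inr j))%R.
Proof.
(* The errors are the z_b (if S_j is in T) or the y_b (otherwise), b in S_j. *)
pose err_vertex b : V2 n p m := if j \in T then inr b else inl (inl b).
have err_inj : injective err_vertex by rewrite /err_vertex; case: (j \in T) => b1 b2 [].
rewrite lez_nat /errors_at; apply: (leq_trans _ (eq_leq (card_S j))).
rewrite -(card_imset _ err_inj).
apply: subset_leq_card; apply/subsetP => -[[b|[l k]]|b].
- rewrite !inE eq_pblock_preim /= eq_sym covering_setsE /err_vertex.
  by case: (j \in T); case bj: (b \in S j) => //= _; apply: imset_f.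
- by rewrite !inE eq_pblock_preim /= (inj_eq set1_inj); case: eqP.
- rewrite !inE eq_pblock_preim /= eq_sym covering_setsE => /andP[Tj bj].
  by apply/imsetP; exists b; rewrite // /err_vertex Tj.
Qed.

End CoverToClustering.

Theorem corollary2 (n p m : nat) (S : 'I_p -> {set 'I_(3 * n)}) :
  (1 <= n)%N -> (1 <= p)%N ->
  (forall i, #|S i| = 3) -> injective S ->
  (6 * n + 3 * p <= m)%N ->
  (exists P : {set {set Vx n p m}},
      partition P [set: Vx n p m] /\
      forall x : V1 n p, ((@errors_at n p m S P x)%:Z <= @tol n p m S x)%R)
  <->
  (exists T : {set 'I_p}, forall u : 'I_(3 * n), #|[set j in T | u \in S j]| = 1).
Proof.
move=> n_gt0 _ card_S _ m_large; split.
- move=> [P [_ errors_le_tol]]; exists [set j | plus_closed S P j] => u.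
  have [j uj shared] := shared_cluster_exists errors_le_tol m_large u.
  have closed_j := plus_closed_of_shared_cluster card_S errors_le_tol shared.
  apply/eqP/cards1P; exists j; apply/setP => l; rewrite !inE.
  apply/andP/eqP => [[closed_l ul] | ->] //.
  have m_gt3 : 3 < m by lia.
  exact: (plus_closed_meet_eq errors_le_tol m_gt3 closed_l closed_j ul uj).
- move=> [T exact_cover]; exists (cover_clustering m S T); split.
    exact: preim_partitionP.
  by case=> [a|j]; [apply: cover_errors_elem | apply: cover_errors_set].
Qed.
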